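(* Let $S\subseteq M_n$ be a noncommutative graph. Then $\mathcal{H}(S)=1$ if and only if $S=M_n$.
   Context: All scalars are complex; $M_n$ denotes complex $n\times n$ matrices. A noncommutative graph is a linear subspace $S\subseteq M_n$ that contains $I_n$ and is closed under conjugate transpose. For a subspace $S\subseteq M_n$, $M_m(S)$ denotes the set of $m\times m$ block matrices $B=[B_{i,j}]_{i,j\in[m]}$ with every block $B_{i,j}\in S$, viewed as elements of $M_{mn}$. The Haemers bound is $\mathcal{H}(S)=\min\{\mathrm{rk}(B):\ m\in\mathbb{N},\ B\in M_m(S),\ \sum_{i=1}^m B_{i,i}=I_n\}$. *)

From HB Require Import structures.
From mathcomp Require Import all_boot all_order all_algebra.
Set Implicit Arguments. Unset Strict Implicit. Unset Printing Implicit Defensive.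
Import Order.TTheory GRing.Theory Num.Theory.
Local Open Scope ring_scope.

Definition ctrmx (C : numClosedFieldType) (n : nat) (A : 'M[C]_n) : 'M[C]_n :=
  (map_mx (fun x => x^*) A)^T.

Definition nc_graph (C : numClosedFieldType) (n : nat) (S : {vspace 'M[C]_n}) :=
  (1%:M \in S) /\ (forall A : 'M[C]_n, A \in S -> ctrmx A \in S).

Definition haemers_feasible (C : numClosedFieldType) (n m : nat)
    (S : {vspace 'M[C]_n}) (B : 'I_m -> 'I_m -> 'M[C]_n) :=
  (forall i j, B i j \in S) /\ \sum_(i < m) B i i = 1%:M.

Definition block_of (C : numClosedFieldType) (n m : nat)
    (B : 'I_m -> 'I_m -> 'M[C]_n) :=
  \mxblock_(i < m, j < m) B i j.

(* haemers_bound S k : H(S) = k, i.e. k is the minimum of rk(B) over all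
   m in N and feasible B in M_m(S). *)
Definition haemers_bound (C : numClosedFieldType) (n : nat)
    (S : {vspace 'M[C]_n}) (k : nat) : Prop :=
  (exists m (B : 'I_m -> 'I_m -> 'M[C]_n),
      haemers_feasible S B /\ \rank (block_of B) = k) /\
  (forall m (B : 'I_m -> 'I_m -> 'M[C]_n),
      haemers_feasible S B -> (k <= \rank (block_of B))%N).

(* A feasible B of rank one factors as a column times a row, so its blocks are
   B_ij = u_i w_j with sum_i u_i w_i = I_n.  Then every X equals
   (sum_i u_i w_i) X (sum_j u_j w_j) = sum_ij (w_i X u_j) u_i w_j, a combination
   of blocks of B, whence S = M_n.  Conversely, when S = M_n the blocks
   B_ij = E_ij form the rank-one matrix vec(I) vec(I)^T, and no feasible B has
   rank 0 because its diagonal blocks sum to I_n <> 0. *)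

From HB Require Import structures.
From mathcomp Require Import all_boot all_order all_algebra.
Import GRing.Theory Num.Theory.
Local Open Scope ring_scope.

Lemma mxrank1_factor {R : fieldType} {m n} (A : 'M[R]_(m, n)) :
  \rank A = 1%N -> exists (u : 'cV_m) (w : 'rV_n), A = u *m w.
Proof.
move=> rkA; have := mulmx_base A.
by move: (col_base A) (row_base A); rewrite rkA => u w <-; exists u, w.
Qed.

Lemma mxblock_rank1_factor {R : fieldType} {p q} {p_ : 'I_p -> nat}
    {q_ : 'I_q -> nat} (B : forall i j, 'M[R]_(p_ i, q_ j)) :
  \rank (\mxblock_(i, j) B i j) = 1%N ->
  exists (u : forall i, 'cV_(p_ i)) (w : forall j, 'rV_(q_ j)),
    forall i j, B i j = u i *m w j.
Proof.
move=> /mxrank1_factor[u [w uwE]].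
exists (submxcol u), (submxrow w) => i j.
by rewrite -(mxblockK B i j) uwE -(submxcolK u) -(submxrowK w)
  mul_mxcol_mxrow mxblockK mxcolK mxrowK.
Qed.

Lemma expand_mx_resolution {R : comNzRingType} {n m}
    {u : 'I_m -> 'cV[R]_n} {w : 'I_m -> 'rV[R]_n} (X : 'M[R]_n) :
  \sum_i u i *m w i = 1%:M ->
  X = \sum_i \sum_j (w i *m X *m u j) 0 0 *: (u i *m w j).
Proof.
move=> uw1.
transitivity ((\sum_i u i *m w i) *m X *m (\sum_j u j *m w j)).
  by rewrite uw1 mul1mx mulmx1.
rewrite !mulmx_suml; apply: eq_bigr => i _.
rewrite mulmx_sumr; apply: eq_bigr => j _.
have -> : u i *m w i *m X *m (u j *m w j) = u i *m (w i *m X *m u j) *m w j.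
  by rewrite !mulmxA.
by rewrite {1}[w i *m X *m u j]mx11_scalar mul_mx_scalar scalemxAl.
Qed.

Lemma resolution_span_full {R : fieldType} {n m} (S : {vspace 'M[R]_n})
    (u : 'I_m -> 'cV[R]_n) (w : 'I_m -> 'rV[R]_n) :
  (forall i j, u i *m w j \in S) -> \sum_i u i *m w i = 1%:M -> S = fullv.
Proof.
move=> uwS uw1; apply/vspaceP => X; rewrite memvf (expand_mx_resolution X uw1).
by apply: rpred_sum => i _; apply: rpred_sum => j _; apply: memvZ.
Qed.

Lemma rank_mxblock_delta_le1 (R : fieldType) n :
  (\rank (\mxblock_(i < n, j < n) (delta_mx i j : 'M[R]_n)) <= 1)%N.
Proof.
have -> : \mxblock_(i < n, j < n) (delta_mx i j : 'M[R]_n)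
    = \mxcol_i (delta_mx i 0 : 'cV_n) *m \mxrow_j (delta_mx 0 j : 'rV_n).
  by rewrite mul_mxcol_mxrow; apply: eq_mxblock => i j; rewrite mul_delta_mx.
exact: leq_trans (mxrankM_maxl _ _) (rank_leq_col _).
Qed.

Section HaemersFeasible.

Context {C : numClosedFieldType} {n : nat}.

Lemma haemers_feasible_rank_gt0 {m} (S : {vspace 'M[C]_n})
    (B : 'I_m -> 'I_m -> 'M[C]_n) :
  (0 < n)%N -> haemers_feasible S B -> (0 < \rank (block_of B))%N.
Proof.
move=> n_gt0 [_ B1]; rewrite lt0n mxrank_eq0; apply/eqP => B0.
have Bij0 i j : B i j = 0.
  by rewrite -(mxblockK B i j) -/(block_of B) B0 submxblock0.
move: (mxrank1 C n); rewrite -B1 big1 // mxrank0 => n0.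
by rewrite -n0 in n_gt0.
Qed.

Lemma haemers_feasible_rank1_full {m} (S : {vspace 'M[C]_n})
    (B : 'I_m -> 'I_m -> 'M[C]_n) :
  haemers_feasible S B -> \rank (block_of B) = 1%N -> S = fullv.
Proof.
move=> [BS B1] /mxblock_rank1_factor[u [w uwE]].
apply: (resolution_span_full S u w) => [i j|]; first by rewrite -uwE.
by rewrite -B1; apply: eq_bigr => i _; rewrite uwE.
Qed.

Lemma haemers_feasible_delta :
  haemers_feasible fullv (fun i j : 'I_n => delta_mx i j : 'M[C]_n).
Proof. by split=> [i j|]; rewrite ?memvf // mx1_sum_delta. Qed.

End HaemersFeasible.

Theorem mainTheorem9 (C : numClosedFieldType) (n : nat) (hn : (0 < n)%N)
    (S : {vspace 'M[C]_n}) (hS : nc_graph S) :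
  haemers_bound S 1 <-> S = fullv.
Proof.
split=> [[[m [B [feasB rkB]]] _] | ->].
  exact: haemers_feasible_rank1_full feasB rkB.
split=> [|m B]; last exact: haemers_feasible_rank_gt0.
exists n, (fun i j => delta_mx i j); split; first exact: haemers_feasible_delta.
apply/eqP; rewrite eqn_leq rank_mxblock_delta_le1.
exact: haemers_feasible_rank_gt0 hn haemers_feasible_delta.
Qed.
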